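(* Let $P$ be a finite nonempty poset with $p$ elements, and let $\epsilon$ and $\mu$ be the labelings of the covering relations $E(P)$ induced by two bijections $\omega,\lambda:P\to\{1,\dots,p\}$. Suppose that $P$ is both $\epsilon$-graded and $\mu$-graded. Then, as polynomials in $t$, $$\Omega\Big(P,\epsilon;t-\frac{r(\epsilon)}{2}\Big)=\Omega\Big(P,\mu;t-\frac{r(\mu)}{2}\Big).$$
   Context: A labeling of a finite poset $P$ with $p$ elements is a bijection $\omega:P\to\{1,\dots,p\}$. Write $x\prec y$ if $y$ covers $x$ and $E(P)=\{(x,y):x\prec y\}$. The labeling $\omega$ induces $\epsilon:E(P)\to\{-1,1\}$, $\epsilon(x,y)=1$ if $\omega(x)<\omega(y)$ and $\epsilon(x,y)=-1$ if $\omega(x)>\omega(y)$. A $(P,\epsilon)$-partition is a map $\sigma:P\to\{1,2,3,\dots\}$ with $\sigma(x)\ge\sigma(y)$ whenever $x\le y$, and $\sigma(x)>\sigma(y)$ whenever $x<y$ and $\omega(x)>\omega(y)$ (equivalently, whenever $x\prec y$ and $\epsilon(x,y)=-1$; so this depends only on $\epsilon$). The order polynomial $\Omega(P,\epsilon;n)$ is the number of $(P,\epsilon)$-partitions with largest part at most $n$; it is a polynomial in $n$ of degree $p$. $P$ is $\epsilon$-graded if the sum $\sum_{i=1}^n\epsilon(x_{i-1},x_i)$ takes the same value for every maximal chain $x_0\prec x_1\prec\cdots\prec x_n$ of $P$; this common value is the rank $r(\epsilon)$. *)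

From HB Require Import structures.
From mathcomp Require Import all_boot all_order all_algebra.
Set Implicit Arguments. Unset Strict Implicit. Unset Printing Implicit Defensive.
Import Order.TTheory GRing.Theory Num.Theory.
Local Open Scope order_scope.

Section PosetDefs.
Context {d : Order.disp_t} {P : finPOrderType d}.

Definition covers (x y : P) : bool :=
  (x < y) && [forall z : P, ~~ ((x < z) && (z < y))].

Definition labeling (w : P -> nat) : Prop :=
  injective w /\ forall x, (1 <= w x <= #|P|)%N.

Definition eps (w : P -> nat) (x y : P) : int :=
  if (w x < w y)%N then 1%R else (-1)%R.

Definition is_partition (w : P -> nat) (n : nat) (s : P -> nat) : bool :=
  [forall x, (1 <= s x <= n)%N] &&
  [forall x, forall y, (x <= y) ==> (s y <= s x)%N] &&
  [forall x, forall y, ((x < y) && (w y < w x)%N) ==> (s y < s x)%N].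

(* the order polynomial evaluated at n (a number of maps) *)
Definition order_count (w : P -> nat) (n : nat) : nat :=
  #|[set s : {ffun P -> 'I_n.+1} | is_partition w n (fun x => nat_of_ord (s x))]|.

Definition minimal (x : P) : bool := [forall z : P, ~~ (z < x)].
Definition maximal (x : P) : bool := [forall z : P, ~~ (x < z)].

Definition max_chain (x0 : P) (rest : seq P) : bool :=
  minimal x0 && path covers x0 rest && maximal (last x0 rest).

Definition chain_sum (w : P -> nat) (x0 : P) (rest : seq P) : int :=
  (\sum_(e <- pairmap (eps w) x0 rest) e)%R.

Definition graded_rank (w : P -> nat) (r : int) : Prop :=
  forall x0 rest, max_chain x0 rest -> chain_sum w x0 rest = r.

End PosetDefs.

From HB Require Import structures.
From mathcomp Require Import all_boot all_order all_algebra.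
Import Order.TTheory GRing.Theory Num.Theory.
From mathcomp Require Import zify lra.
Set Implicit Arguments. Unset Strict Implicit. Unset Printing Implicit Defensive.

(* Both order polynomials are shifted by half the rank, so it suffices to show
   Omega(P,eps;n) = Omega(P,mu;n-c) for all large n, where 2c = r(mu) - r(eps).
   Let D_eps(x,y) in {0,1} indicate eps(x,y) = -1.  A map s : P -> Z is a
   (P,eps)-partition with parts at most n iff s <= n on minimal elements, s >= 1
   on maximal ones and s x - s y >= D_eps(x,y) on every cover x < y.  The eps-sum
   of a maximal chain is its length minus twice its number of descents, so when P
   is eps- and mu-graded, D_eps - D_mu sums to the same c along every maximal
   chain.  It therefore integrates to a potential k, zero on minimal and equal to
   c on maximal elements, and s |-> s + k - c carries (P,eps)-partitions with
   parts at most n bijectively onto (P,mu)-partitions with parts at most n - c.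
   Polynomiality: a map into {0,...,n-1} with k distinct values is an increasing
   injection {0,...,k-1} -> {0,...,n-1} after a map onto {0,...,k-1}, and the
   partition conditions only see the relative order of the values, so the count
   is a sum of multiples of the binomials C(n,k). *)

Lemma sorted_tnth_ltn n k (t : k.-tuple 'I_n) : sorted ltn (map val t) ->
  forall i j : 'I_k, (i < j)%N -> (tnth t i < tnth t j)%N.
Proof.
move=> t_sorted i j; have := sorted_ltn_nth ltn_trans 0 t_sorted.
rewrite size_map size_tuple => /(_ i j (ltn_ord i) (ltn_ord j)).
by rewrite !(nth_map (tnth t i)) ?size_tuple // -!tnth_nth.
Qed.

Lemma sorted_tnth_leq n k (t : k.-tuple 'I_n) : sorted ltn (map val t) ->
  forall i j : 'I_k, (tnth t i <= tnth t j)%N = (i <= j)%N.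
Proof.
move=> t_sorted i j; have lt_t := sorted_tnth_ltn t_sorted.
case: (ltngtP i j) => [lt_ij|lt_ji|/val_inj->]; last by rewrite leqnn.
  by rewrite ltnW ?lt_t.
by rewrite leqNgt lt_t.
Qed.

Lemma sorted_tnth_inj n k (t : k.-tuple 'I_n) : sorted ltn (map val t) ->
  injective (tnth t).
Proof.
move=> t_sorted i j tij; apply/val_inj/anti_leq.
by rewrite -!(sorted_tnth_leq t_sorted) tij leqnn.
Qed.

Lemma sorted_enum_ord n (A : {set 'I_n}) : sorted ltn (map val (enum A)).
Proof.
rewrite sorted_map /enum_mem -enumT; apply: sorted_filter.
  by move=> ? ? ?; apply: ltn_trans.
by rewrite -sorted_map val_enum_ord iota_ltn_sorted.
Qed.

Local Open Scope ring_scope.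

Definition binomial_poly (k : nat) : {poly rat} :=
  (k`!%:R)^-1 *: \prod_(i < k) ('X - i%:R%:P).

Lemma horner_binomial_poly n k : (binomial_poly k).[n%:R] = 'C(n, k)%:R.
Proof.
rewrite /binomial_poly hornerZ horner_prod.
under eq_bigr do rewrite hornerXsubC.
have -> : \prod_(i < k) (n%:R - i%:R : rat) = (n ^_ k)%:R.
  elim: k => [|k IHk]; first by rewrite big_ord0 ffactn0.
  rewrite big_ord_recr /= IHk ffactnSr natrM.
  case: (leqP k n) => [le_kn|lt_nk]; first by rewrite natrB.
  by rewrite ffact_small // mulr0n !mul0r.
by rewrite -bin_ffact natrM mulrC mulfK // pnatr_eq0 -lt0n fact_gt0.
Qed.

Definition order_invariant (X : Type) (R : (X -> nat) -> bool) :=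
  forall s1 s2 : X -> nat,
    (forall x y, (s1 x <= s1 y)%N = (s2 x <= s2 y)%N) -> R s1 = R s2.

Section OrderInvariantCount.
Variables (X : finType) (R : (X -> nat) -> bool).
Hypothesis R_inv : order_invariant R.

Definition values n (t : {ffun X -> 'I_n}) : {set 'I_n} := [set t x | x : X].

Definition image_count n k :=
  #|[set t : {ffun X -> 'I_n} | R (fun x => val (t x)) & #|values t| == k]|.

Section Relabel.
Variables n k : nat.
Implicit Types (u : k.-tuple 'I_n) (c : {ffun X -> 'I_k}) (t : {ffun X -> 'I_n}).

Let sorted_tuples := [set u : k.-tuple 'I_n | sorted ltn (map val u)].
Let onto_maps :=
  [set c : {ffun X -> 'I_k} | R (fun x => val (c x)) & #|values c| == k].

Definition relabel (uc : k.-tuple 'I_n * {ffun X -> 'I_k}) : {ffun X -> 'I_n} :=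
  [ffun x => tnth uc.1 (uc.2 x)].

Lemma values_onto c : c \in onto_maps -> values c = setT.
Proof.
rewrite inE => /andP[_ /eqP ck].
by apply/eqP; rewrite eqEcard subsetT cardsT card_ord ck leqnn.
Qed.

Lemma values_relabel u c : values (relabel (u, c)) = tnth u @: values c.
Proof. by rewrite /values -imset_comp; apply: eq_imset => x; rewrite ffunE. Qed.

Lemma mem_values_relabel u c : c \in onto_maps ->
  values (relabel (u, c)) =i u.
Proof.
move=> c_onto y; rewrite values_relabel values_onto //.
apply/imsetP/tnthP => [[i _ ->]|[i ->]]; first by exists i.
by exists i; rewrite ?inE.
Qed.

Lemma relabel_inj : {in setX sorted_tuples onto_maps &, injective relabel}.
Proof.
move=> [u1 c1] [u2 c2]; rewrite !in_setX /= [u1 \in _]inE [u2 \in _]inE.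
move=> /andP[u1_sorted c1_onto] /andP[u2_sorted c2_onto] eq_uc.
have eq_u : u1 = u2.
  apply/val_inj/(irr_sorted_eq (leT := relpre val ltn)) => //.
  - by move=> ? ? ?; apply: ltn_trans.
  - by move=> ?; apply: ltnn.
  - by rewrite -sorted_map.
  - by rewrite -sorted_map.
  move=> y; rewrite -(mem_values_relabel u1 c1_onto) eq_uc.
  exact: mem_values_relabel.
subst u2; congr pair; apply/ffunP => x.
have := congr1 (fun f : {ffun X -> 'I_n} => f x) eq_uc; rewrite !ffunE.
exact: sorted_tnth_inj.
Qed.

Lemma R_relabel u c : sorted ltn (map val u) ->
  R (fun x => val (relabel (u, c) x)) = R (fun x => val (c x)).
Proof.
by move=> u_sorted; apply: R_inv => x y; rewrite !ffunE sorted_tnth_leq.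
Qed.

Lemma relabel_surj t : R (fun x => val (t x)) -> #|values t| = k ->
  exists2 uc, uc \in setX sorted_tuples onto_maps & t = relabel uc.
Proof.
move=> Rt tk; pose e := enum (values t).
have size_e : size e == k by rewrite -cardE tk.
pose u := Tuple size_e.
have u_sorted : sorted ltn (map val u) by apply: sorted_enum_ord.
have t_in_e x : t x \in e by rewrite mem_enum; apply/imsetP; exists x.
have index_lt x : (index (t x) e < k)%N by rewrite -(eqP size_e) index_mem.
pose c := [ffun x => Ordinal (index_lt x)].
have t_uc : t = relabel (u, c).
  by apply/ffunP => x; rewrite !ffunE (tnth_nth (t x)) /= nth_index.
exists (u, c) => //; rewrite !inE /= u_sorted -(R_relabel c u_sorted) -t_uc Rt /=.
suff -> : values c = setT by rewrite cardsT card_ord.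
apply/eqP; rewrite eqEsubset subsetT; apply/subsetP => j _.
have /imsetP[x _ tx] : tnth u j \in values t by rewrite -mem_enum mem_tnth.
apply/imsetP; exists x => //; apply: val_inj.
by rewrite ffunE /= -tx (tnth_nth (t x)) index_uniq ?enum_uniq ?(eqP size_e).
Qed.

Lemma image_count_relabel :
  [set t : {ffun X -> 'I_n} | R (fun x => val (t x)) & #|values t| == k]
  = relabel @: setX sorted_tuples onto_maps.
Proof.
apply/setP => t; rewrite inE; apply/andP/imsetP => [[Rt /eqP tk]|].
  exact: relabel_surj.
case=> [[u c]]; rewrite !inE /= => /andP[u_sorted /andP[Rc ck]] ->.
rewrite R_relabel // Rc values_relabel card_imset ?(eqP ck) //.
exact: sorted_tnth_inj.
Qed.

End Relabel.

Lemma image_count_binomial n k : image_count n k = ('C(n, k) * image_count k k)%N.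
Proof.
rewrite /image_count image_count_relabel card_in_imset; last exact: relabel_inj.
by rewrite cardsX card_ltn_sorted_tuples.
Qed.

Lemma card_order_invariant n :
  #|[set t : {ffun X -> 'I_n} | R (fun x => val (t x))]|
  = (\sum_(k < #|X|.+1) image_count n k)%N.
Proof.
rewrite -sum1_card (partition_big (fun t => inord #|values t| : 'I_#|X|.+1) predT) //=.
apply: eq_bigr => k _; rewrite sum1_card; apply: eq_card => t; rewrite !inE.
have values_le : (#|values t| < #|X|.+1)%N.
  by rewrite ltnS (leq_trans (leq_imset_card _ _)) ?max_card.
congr andb; first by rewrite inE.
apply/eqP/eqP => [<-|tk]; first by rewrite inordK.
by apply: val_inj; rewrite /= inordK.
Qed.

Lemma order_invariant_count_poly : exists f : {poly rat}, forall n,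
  f.[n%:R] = #|[set t : {ffun X -> 'I_n} | R (fun x => val (t x))]|%:R.
Proof.
exists (\sum_(k < #|X|.+1) (image_count k k)%:R *: binomial_poly k) => n.
rewrite card_order_invariant horner_sum natr_sum; apply: eq_bigr => k _.
by rewrite (image_count_binomial n) hornerZ horner_binomial_poly natrM mulrC.
Qed.

End OrderInvariantCount.

Section FinPoset.
Context {d : Order.disp_t} {P : finPOrderType d}.
Local Open Scope order_scope.

Lemma exists_minimal_in (A : pred P) (x : P) : A x ->
  exists2 z, A z & forall y, A y -> ~~ (y < z).
Proof.
move=> Ax; case: (arg_minnP (fun z => #|[set y | y < z]|) Ax) => z Az z_min.
exists z => // y Ay; apply/negP => y_lt_z.
have := z_min y Ay; rewrite leqNgt => /negP; apply; apply: proper_card.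
apply/properP; split; last by exists y; rewrite !inE ?ltxx.
by apply/subsetP => u; rewrite !inE => /lt_trans; apply.
Qed.

Lemma exists_minimal_le (x : P) : exists2 z, minimal z & z <= x.
Proof.
have [z z_le_x z_min] := @exists_minimal_in (fun z => z <= x) x (lexx x).
exists z => //; apply/forallP => y; apply/negP => y_lt_z.
by have := z_min y (le_trans (ltW y_lt_z) z_le_x); rewrite y_lt_z.
Qed.

Lemma exists_covers_le (x y : P) : x < y -> exists2 z, covers x z & z <= y.
Proof.
move=> x_lt_y; have Ay : (x < y) && (y <= y) by rewrite x_lt_y lexx.
have [z /andP[x_lt_z z_le_y] z_min] :=
  @exists_minimal_in (fun z => (x < z) && (z <= y)) y Ay.
exists z => //; rewrite /covers x_lt_z; apply/forallP => u.
apply/andP => -[x_lt_u u_lt_z].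
by have := z_min u; rewrite x_lt_u u_lt_z (le_trans (ltW u_lt_z) z_le_y) => /(_ isT).
Qed.

Lemma exists_covers_path (x y : P) : x <= y ->
  exists2 c, path covers x c & last x c = y.
Proof.
have [m] := ubnP #|[set u | x < u]|; elim: m x => // m IHm x x_m x_le_y.
case: (eqVneq x y) => [<-|x_neq_y]; first by exists [::].
have [z cov_xz z_le_y] : exists2 z, covers x z & z <= y.
  by apply: exists_covers_le; rewrite lt_neqAle x_neq_y.
have x_lt_z : x < z by case/andP: cov_xz.
have lt_card : (#|[set u | (z < u)%O]| < #|[set u | (x < u)%O]|)%N.
  apply: proper_card; apply/properP; split; last by exists z; rewrite !inE ?ltxx.
  by apply/subsetP => u; rewrite !inE; apply: lt_trans.
have [c z_c last_c] := IHm z (leq_trans lt_card x_m) z_le_y.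
by exists (z :: c); rewrite /= ?cov_xz.
Qed.

End FinPoset.

Lemma exists_maximal_ge d (P : finPOrderType d) (x : P) :
  exists2 z, maximal z & (x <= z)%O.
Proof. exact: (@exists_minimal_le _ P^d x). Qed.

Section EdgeSum.
Variable T : Type.

Definition edge_sum (F : T -> T -> int) (x : T) (c : seq T) : int :=
  \sum_(e <- pairmap F x c) e.

Lemma edge_sum_nil F x : edge_sum F x [::] = 0.
Proof. by rewrite /edge_sum big_nil. Qed.

Lemma edge_sum_cons F x y c : edge_sum F x (y :: c) = F x y + edge_sum F y c.
Proof. by rewrite /edge_sum /= big_cons. Qed.

Lemma edge_sum_cat F x c1 c2 :
  edge_sum F x (c1 ++ c2) = edge_sum F x c1 + edge_sum F (last x c1) c2.
Proof. by rewrite /edge_sum pairmap_cat big_cat. Qed.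

Lemma edge_sumB F G x c :
  edge_sum (fun y z => F y z - G y z) x c = edge_sum F x c - edge_sum G x c.
Proof.
elim: c x => [|y c IHc] x; first by rewrite !edge_sum_nil subr0.
by rewrite !edge_sum_cons IHc opprD addrACA.
Qed.

Lemma edge_sum_ge0 F x c : (forall y z, 0 <= F y z) -> 0 <= edge_sum F x c.
Proof.
move=> F_ge0; elim: c x => [|y c IHc] x; first by rewrite edge_sum_nil.
by rewrite edge_sum_cons addr_ge0.
Qed.

Definition descent (w : T -> nat) (x y : T) : int := if (w x < w y)%N then 0 else 1.

Lemma descent_ge0 w x y : 0 <= descent w x y.
Proof. by rewrite /descent; case: ifP. Qed.

Lemma edge_sum_descent_gt0 w x c : (w (last x c) < w x)%N ->
  0 < edge_sum (descent w) x c.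
Proof.
elim: c x => [|y c IHc] x /=; first by rewrite ltnn.
move=> lt_last_x; rewrite edge_sum_cons /descent.
case: ifP => [lt_xy|_]; first by rewrite add0r IHc // (ltn_trans lt_last_x).
by rewrite ltr_pwDl // edge_sum_ge0 // => ? ?; apply: descent_ge0.
Qed.

End EdgeSum.

Section CoverPartition.
Context {d : Order.disp_t} {P : finPOrderType d}.
Variable w : P -> nat.

Definition cover_partition (n : int) (s : P -> int) :=
  [/\ forall x, minimal x -> s x <= n,
      forall x, maximal x -> 1 <= s x &
      forall x y, covers x y -> descent w x y <= s x - s y].

Variables (n : int) (s : P -> int).
Hypothesis s_part : cover_partition n s.

Lemma cover_partition_path x c : path covers x c ->
  edge_sum (descent w) x c <= s x - s (last x c).
Proof.
case: s_part => _ _ s_cov; elim: c x => [|y c IHc] x /=.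
  by rewrite edge_sum_nil subrr.
case/andP=> cov_xy y_c; rewrite edge_sum_cons.
have := IHc y y_c; have := s_cov x y cov_xy; lia.
Qed.

Lemma cover_partition_le x y : (x <= y)%O -> s y <= s x.
Proof.
case/exists_covers_path=> c x_c <-; rewrite -subr_ge0.
exact: le_trans (edge_sum_ge0 _ _ (descent_ge0 w)) (cover_partition_path x_c).
Qed.

Lemma cover_partition_lt x y : (x < y)%O -> (w y < w x)%N -> s y < s x.
Proof.
move/ltW/exists_covers_path=> [c x_c last_c] lt_wyx; rewrite -subr_gt0 -last_c.
apply: lt_le_trans (cover_partition_path x_c).
by apply: edge_sum_descent_gt0; rewrite last_c.
Qed.

Lemma cover_partition_bounds x : 1 <= s x <= n.
Proof.
case: s_part => s_min s_max _.
have [z z_min z_le_x] := exists_minimal_le x.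
have [m m_max x_le_m] := exists_maximal_ge x.
rewrite (le_trans (s_max m m_max) (cover_partition_le x_le_m)) /=.
exact: le_trans (cover_partition_le z_le_x) (s_min z z_min).
Qed.

End CoverPartition.

Section PartitionCorrespondence.
Context {d : Order.disp_t} {P : finPOrderType d}.
Variable w : P -> nat.

Lemma is_partition_ext n (s1 s2 : P -> nat) : s1 =1 s2 ->
  is_partition w n s1 = is_partition w n s2.
Proof.
move=> eq_s; rewrite /is_partition; congr (_ && _ && _);
  apply: eq_forallb => x; try apply: eq_forallb => y; by rewrite !eq_s.
Qed.

Lemma cover_partition_is_partition (n : nat) s : cover_partition w n s ->
  is_partition w n (fun x => absz (s x)).
Proof.
move=> s_part; have s_bounds := cover_partition_bounds s_part.
apply/andP; split; [apply/andP; split|].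
- by apply/forallP => x; have := s_bounds x; lia.
- apply/forallP => x; apply/forallP => y; apply/implyP.
  move=> /(cover_partition_le s_part).
  by have := s_bounds x; have := s_bounds y; lia.
- apply/forallP => x; apply/forallP => y; apply/implyP.
  case/andP=> x_lt_y /(cover_partition_lt s_part x_lt_y).
  by have := s_bounds x; have := s_bounds y; lia.
Qed.

Lemma is_partition_cover_partition n (s : P -> nat) : injective w ->
  is_partition w n s -> cover_partition w n (fun x => (s x)%:Z).
Proof.
move=> w_inj /andP[/andP[/forallP s_bounds /forallP s_le] /forallP s_lt].
split=> [x _|x _|x y /andP[x_lt_y _]]; [by have /= := s_bounds x; lia..|].
have s_yx := implyP (forallP (s_le x) y) (ltW x_lt_y).
rewrite /descent; case: ltnP => [_|le_wyx]; first by lia.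
have neq_wxy : w y != w x by apply: contraTneq x_lt_y => /w_inj ->; rewrite ltxx.
have := implyP (forallP (s_lt x) y); rewrite x_lt_y ltn_neqAle neq_wxy le_wyx.
by move=> /(_ isT); lia.
Qed.

End PartitionCorrespondence.

Section Potential.
Context {d : Order.disp_t} {P : finPOrderType d}.

Lemma exists_path_from_minimal (x : P) :
  exists zc : P * seq P, [&& minimal zc.1, path covers zc.1 zc.2 & last zc.1 zc.2 == x].
Proof.
have [z z_min z_le_x] := exists_minimal_le x.
have [c z_c /eqP last_c] := exists_covers_path z_le_x.
by exists (z, c); rewrite /= z_min z_c.
Qed.

Lemma exists_path_to_maximal (x : P) :
  exists2 c, path covers x c & maximal (last x c).
Proof.
have [m m_max x_le_m] := exists_maximal_ge x.
by have [c x_c last_c] := exists_covers_path x_le_m; exists c; rewrite ?last_c.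
Qed.

Variables (F : P -> P -> int) (r : int).
Hypothesis max_chain_sum : forall x c, max_chain x c -> edge_sum F x c = r.

Lemma edge_sum_from_minimal z1 c1 z2 c2 :
  minimal z1 -> path covers z1 c1 -> minimal z2 -> path covers z2 c2 ->
  last z1 c1 = last z2 c2 -> edge_sum F z1 c1 = edge_sum F z2 c2.
Proof.
move=> z1_min z1_c1 z2_min z2_c2 eq_last.
have [c x_c c_max] := exists_path_to_maximal (last z1 c1).
have chain1 : max_chain z1 (c1 ++ c).
  by rewrite /max_chain z1_min cat_path z1_c1 x_c last_cat.
have chain2 : max_chain z2 (c2 ++ c).
  by rewrite /max_chain z2_min cat_path z2_c2 -eq_last x_c last_cat -eq_last.
move: (max_chain_sum chain1); rewrite -(max_chain_sum chain2) !edge_sum_cat.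
by rewrite eq_last => /addIr.
Qed.

Lemma exists_potential : exists k : P -> int,
  [/\ forall x, minimal x -> k x = 0,
      forall x y, covers x y -> k y = k x + F x y &
      forall x, maximal x -> k x = r].
Proof.
pose zc x := xchoose (exists_path_from_minimal x).
have /all_and3[zc_min zc_path zc_last] x :
    [/\ minimal (zc x).1, path covers (zc x).1 (zc x).2 & last (zc x).1 (zc x).2 = x].
  by have /and3P[? ? /eqP ?] := xchooseP (exists_path_from_minimal x).
exists (fun x => edge_sum F (zc x).1 (zc x).2); split.
- move=> x x_min; rewrite -(edge_sum_nil F x).
  by apply: edge_sum_from_minimal; rewrite ?zc_last.
- move=> x y cov_xy.
  rewrite (@edge_sum_from_minimal _ _ (zc x).1 (rcons (zc x).2 y)) //.
  + by rewrite -cats1 edge_sum_cat zc_last edge_sum_cons edge_sum_nil addr0.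
  + by rewrite rcons_path zc_path zc_last.
  + by rewrite zc_last last_rcons.
- move=> x x_max; apply: max_chain_sum.
  by rewrite /max_chain zc_min zc_path zc_last.
Qed.

End Potential.

Section Transfer.
Context {d : Order.disp_t} {P : finPOrderType d}.
Variables w l : P -> nat.

Lemma order_count_le_of_inj n n' (phi : (P -> nat) -> P -> nat) :
  (forall s, is_partition w n s -> is_partition l n' (phi s)) ->
  (forall s1 s2, is_partition w n s1 -> is_partition w n s2 ->
     phi s1 =1 phi s2 -> s1 =1 s2) ->
  (order_count w n <= order_count l n')%N.
Proof.
move=> phi_part phi_inj.
pose f (s : {ffun P -> 'I_n.+1}) : {ffun P -> 'I_n'.+1} :=
  [ffun x => inord (phi (fun y => val (s y)) x)].
have f_vals (s : {ffun P -> 'I_n.+1}) : is_partition w n (fun y => val (s y)) ->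
    (fun x => val (f s x)) =1 phi (fun y => val (s y)).
  move=> /phi_part /andP[/andP[/forallP bounds _] _] x.
  by rewrite /f ffunE /= inordK // ltnS; case/andP: (bounds x).
have f_inj :
    {in [set s : {ffun P -> 'I_n.+1} | is_partition w n (fun y => val (s y))] &,
     injective f}.
  move=> s1 s2; rewrite !inE => s1_part s2_part eq_f.
  apply/ffunP => x; apply/val_inj; apply: (phi_inj _ _ s1_part s2_part) => y.
  by rewrite -!f_vals // eq_f.
rewrite /order_count -(card_in_imset f_inj); apply: subset_leq_card.
apply/subsetP => t /imsetP[s]; rewrite inE => s_part ->.
by rewrite inE (is_partition_ext _ _ (f_vals s s_part)) phi_part.
Qed.

Variables (k : P -> int) (c : int).
Hypotheses (k_min : forall x, minimal x -> k x = 0)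
  (k_max : forall x, maximal x -> k x = c)
  (k_covers : forall x y, covers x y -> k y = k x + descent w x y - descent l x y).

Lemma cover_partition_shift n s : cover_partition w n s ->
  cover_partition l (n - c) (fun x => s x + k x - c).
Proof.
case=> s_min s_max s_cov; split.
- by move=> x x_min; have := s_min x x_min; rewrite k_min //; lia.
- by move=> x x_max; have := s_max x x_max; rewrite k_max //; lia.
- by move=> x y cov_xy; have := s_cov x y cov_xy; rewrite (k_covers cov_xy); lia.
Qed.

Lemma order_count_le_shift n n' : injective w -> n'%:Z = n%:Z - c ->
  (order_count w n <= order_count l n')%N.
Proof.
move=> w_inj n'_def; pose shift (s : P -> nat) x := ((s x)%:Z + k x - c)%R.
have shift_part s : is_partition w n s -> cover_partition l n' (shift s).
  by move=> /(is_partition_cover_partition w_inj)/cover_partition_shift; rewrite n'_def.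
apply: (order_count_le_of_inj (phi := fun s x => absz (shift s x))).
  by move=> s /shift_part/cover_partition_is_partition.
move=> s1 s2 /shift_part/cover_partition_bounds b1.
move=> /shift_part/cover_partition_bounds b2 eq_shift x.
by have := eq_shift x; have := b1 x; have := b2 x; rewrite /shift; lia.
Qed.

End Transfer.

Section Graded.
Context {d : Order.disp_t} {P : finPOrderType d}.

Lemma eps_descent (w : P -> nat) x y : eps w x y = 1 - 2 * descent w x y.
Proof. by rewrite /eps /descent; case: ifP. Qed.

Lemma chain_sum_descent (w : P -> nat) x c :
  chain_sum w x c = (size c)%:Z - 2 * edge_sum (descent w) x c.
Proof.
rewrite -[chain_sum w x c]/(edge_sum (eps w) x c).
elim: c x => [|y c IHc] x; first by rewrite !edge_sum_nil.
rewrite !edge_sum_cons IHc eps_descent [size (y :: c)]/=; lia.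
Qed.

Lemma graded_descent_diff (w l : P -> nat) (re rm : int) x c :
  graded_rank w re -> graded_rank l rm -> max_chain x c ->
  2 * edge_sum (fun y z => descent w y z - descent l y z) x c = rm - re.
Proof.
move=> w_graded l_graded chain_xc.
rewrite -(w_graded _ _ chain_xc) -(l_graded _ _ chain_xc) !chain_sum_descent edge_sumB.
lia.
Qed.

Lemma exists_max_chain : (0 < #|P|)%N -> exists (x : P) c, max_chain x c.
Proof.
case/card_gt0P=> x _.
have [[z c] /and3P[/= z_min z_c /eqP last_c]] := exists_path_from_minimal x.
have [c' x_c' c'_max] := exists_path_to_maximal x.
exists z, (c ++ c').
by rewrite /max_chain z_min cat_path z_c last_c x_c' last_cat last_c.
Qed.

Lemma order_count_shift_eq (w l : P -> nat) (re rm : int) :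
  (0 < #|P|)%N -> injective w -> injective l ->
  graded_rank w re -> graded_rank l rm ->
  exists c : int, 2 * c = rm - re /\
    forall n n' : nat, n'%:Z = n%:Z - c -> order_count w n = order_count l n'.
Proof.
move=> P_gt0 w_inj l_inj w_graded l_graded.
pose F x y := descent w x y - descent l x y.
have [x0 [c0 chain0]] := exists_max_chain P_gt0.
pose r := edge_sum F x0 c0.
have F_sum x c : max_chain x c -> edge_sum F x c = r.
  move=> chain_xc; have := graded_descent_diff w_graded l_graded chain_xc.
  by rewrite -(graded_descent_diff w_graded l_graded chain0) /r /F; lia.
have [k [k_min k_covers k_max]] := exists_potential F_sum.
exists r; split; first exact: graded_descent_diff.
move=> n n' n'_def; apply/eqP; rewrite eqn_leq; apply/andP; split.
  apply: (order_count_le_shift (k := k) (c := r)) => // x y /k_covers.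
  by rewrite /F; lia.
apply: (order_count_le_shift (k := fun x => - k x) (c := - r)) => //.
- by move=> x /k_min ->.
- by move=> x /k_max ->.
- by move=> x y /k_covers; rewrite /F; lia.
- lia.
Qed.

End Graded.

Section OrderPolynomial.
Context {d : Order.disp_t} {P : finPOrderType d}.
Variable w : P -> nat.

Definition eps_compatible (s : P -> nat) : bool :=
  [forall x, forall y, (x <= y)%O ==> (s y <= s x)%N] &&
  [forall x, forall y, ((x < y)%O && (w y < w x)%N) ==> (s y < s x)%N].

Lemma is_partitionE n s :
  is_partition w n s = [forall x, (1 <= s x <= n)%N] && eps_compatible s.
Proof. by rewrite /is_partition andbA. Qed.

Lemma eps_compatible_order_invariant : order_invariant eps_compatible.
Proof.
move=> s1 s2 eq_le; rewrite /eps_compatible; congr (_ && _);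
  apply: eq_forallb => x; apply: eq_forallb => y; by rewrite ?ltnNge eq_le.
Qed.

Lemma order_count_lift n : order_count w n =
  #|[set t : {ffun P -> 'I_n} | eps_compatible (fun x => val (t x))]|.
Proof.
pose up (t : {ffun P -> 'I_n}) : {ffun P -> 'I_n.+1} := [ffun x => lift ord0 (t x)].
have up_val t x : val (up t x) = (val (t x)).+1 by rewrite ffunE.
have up_inj : injective up.
  move=> t1 t2 eq_up; apply/ffunP => x.
  by apply/val_inj/succn_inj; rewrite -!up_val eq_up.
rewrite /order_count -(card_imset _ up_inj); apply: eq_card => s; rewrite inE.
apply/idP/imsetP => [|[t]]; last first.
  rewrite inE => t_compat ->; rewrite is_partitionE.
  apply/andP; split; first by apply/forallP => x; rewrite up_val ltn_ord.
  rewrite (eps_compatible_order_invariant (s2 := fun x => val (t x))) //.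
  by move=> x y; rewrite !ffunE !lift0 ltnS.
rewrite is_partitionE => /andP[/forallP s_bounds s_compat].
have s_pred x : ((s x).-1 < n)%N by have /= := s_bounds x; lia.
have s_succ x : (s x).-1.+1 = s x by have /= := s_bounds x; lia.
exists [ffun x => Ordinal (s_pred x)].
  rewrite inE -(eps_compatible_order_invariant (s1 := fun x => val (s x))) // => x y.
  by rewrite !ffunE /=; have /= := s_bounds x; have /= := s_bounds y; lia.
by apply/ffunP => x; apply/val_inj; rewrite up_val ffunE s_succ.
Qed.

Lemma order_count_poly : exists f : {poly rat}, forall n : nat,
  f.[n%:R] = (order_count w n)%:R.
Proof.
have [f f_count] := order_invariant_count_poly eps_compatible_order_invariant.
by exists f => n; rewrite f_count order_count_lift.
Qed.

End OrderPolynomial.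

Lemma poly_eq_on_nat_shift (R : numDomainType) (p q : {poly R}) (a : R) (N : nat) :
  (forall n, (N <= n)%N -> p.[n%:R + a] = q.[n%:R + a]) -> p = q.
Proof.
move=> eq_pq; apply/eqP; rewrite -subr_eq0; apply/eqP.
apply: (@roots_geq_poly_eq0 _ _ [seq (N + i)%:R + a | i <- iota 0 (size (p - q))]).
- apply/allP => _ /mapP[i _ ->].
  by rewrite /root hornerD hornerN eq_pq ?leq_addr // subrr.
- rewrite map_inj_uniq ?iota_uniq // => i j /addIr/eqP.
  by rewrite eqr_nat eqn_add2l => /eqP.
- by rewrite size_map size_iota.
Qed.

Theorem theorem2p2 (d : Order.disp_t) (P : finPOrderType d)
  (w l : P -> nat) (re rm : int) :
  (0 < #|P|)%N ->
  labeling w -> labeling l ->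
  graded_rank w re -> graded_rank l rm ->
  exists f g : {poly rat},
    (forall n : nat, f.[n%:R] = (order_count w n)%:R) /\
    (forall n : nat, g.[n%:R] = (order_count l n)%:R) /\
    f \Po ('X - (re%:~R / 2)%:P) = g \Po ('X - (rm%:~R / 2)%:P).
Proof.
move=> P_gt0 [w_inj _] [l_inj _] w_graded l_graded.
have [c [c_def count_eq]] := order_count_shift_eq P_gt0 w_inj l_inj w_graded l_graded.
have [f f_count] := order_count_poly w.
have [g g_count] := order_count_poly l.
exists f, g; do 2!split=> //.
apply: (@poly_eq_on_nat_shift _ _ _ (re%:~R / 2) (absz c)) => n le_cn.
have [m m_def] : exists m : nat, m%:Z = n%:Z - c by exists (absz (n%:Z - c)); lia.
have c_rat : (2 * c%:~R : rat) = rm%:~R - re%:~R by rewrite -intrB -c_def intrM.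
have shift_rat : (n%:R + re%:~R / 2 - rm%:~R / 2 : rat) = m%:R.
  by rewrite [m%:R]pmulrn m_def intrB -pmulrn; lra.
rewrite !horner_comp !hornerXsubC addrK shift_rat f_count g_count.
by rewrite (count_eq _ _ m_def).
Qed.
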